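(* Let $B=[\alpha_1,\beta_1]\times\dots\times[\alpha_d,\beta_d]$ be an axis-parallel box in $\mathbb{R}^d$ with a diagonally opposite pair of vertices $(\lambda,\lambda')$, and let $B'$ be another axis-parallel box in $\mathbb{R}^d$ with $B'\cap\{\lambda,\lambda'\}=\emptyset$. Then $B'$ is disjoint from at least two faces of $B$.
   Context: For a box $B=[\alpha_1,\beta_1]\times\dots\times[\alpha_d,\beta_d]$: a vertex is a point $(\lambda_1,\dots,\lambda_d)$ with $\lambda_j\in\{\alpha_j,\beta_j\}$ for all $j$; vertices $\lambda=(\lambda_1,\dots,\lambda_d)$ and $\lambda'=(\lambda'_1,\dots,\lambda'_d)$ are diagonally opposite if $\{\lambda_j,\lambda'_j\}=\{\alpha_j,\beta_j\}$ for every $j\in[d]$; a face of $B$ is a set of the form $B\cap\{x: x_j=\alpha_j\}$ or $B\cap\{x:x_j=\beta_j\}$ for some $j\in[d]$. *)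

From HB Require Import structures.
From mathcomp Require Import all_boot all_order all_algebra.
Set Implicit Arguments. Unset Strict Implicit. Unset Printing Implicit Defensive.
Import Order.TTheory GRing.Theory Num.Theory.
Local Open Scope ring_scope.

Definition in_box (R : realFieldType) (d : nat) (a b : 'I_d -> R) (x : 'I_d -> R) : Prop :=
  forall j : 'I_d, a j <= x j /\ x j <= b j.

Definition diag_opposite (R : realFieldType) (d : nat) (a b lam lam' : 'I_d -> R) : Prop :=
  forall j : 'I_d,
    (lam j = a j /\ lam' j = b j) \/ (lam j = b j /\ lam' j = a j).

Definition in_face (R : realFieldType) (d : nat) (a b : 'I_d -> R)
  (f : 'I_d * bool) (x : 'I_d -> R) : Prop :=
  in_box a b x /\ x f.1 = (if f.2 then b f.1 else a f.1).

From HB Require Import structures.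
From mathcomp Require Import all_boot all_order all_algebra.
Import Order.TTheory GRing.Theory Num.Theory.
Set Implicit Arguments. Unset Strict Implicit.
Local Open Scope ring_scope.

(* Since lam is not in B', some coordinate j has lam_j outside [a'_j, b'_j];
   the face of B through lam in direction j lies in the hyperplane
   x_j = lam_j and so misses B'.  Likewise some coordinate k gives a face
   through lam' missing B'.  If j = k these two faces are opposite faces of
   B, hence distinct in either case. *)

Section Boxes.

Variables (R : realFieldType) (d : nat).
Implicit Types (a b lam x : 'I_d -> R) (f : 'I_d * bool).

Definition face_level a b f : R := if f.2 then b f.1 else a f.1.

Lemma in_boxP a b x : reflect (in_box a b x) [forall j, a j <= x j <= b j].
Proof.
apply: (iffP forallP) => [inab j | inab j]; first exact/andP.
by case: (inab j) => -> ->.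
Qed.

Lemma in_boxPn a b x :
  ~ in_box a b x -> exists j, ~~ (a j <= x j <= b j).
Proof. by move/in_boxP; rewrite negb_forall => /existsP. Qed.

Lemma in_face_outside_box a b a' b' f x :
  ~~ (a' f.1 <= face_level a b f <= b' f.1) ->
  in_face a b f x -> ~ in_box a' b' x.
Proof.
move=> outside [_ xf] /(_ f.1) [le_a'x le_xb'].
by move: outside; rewrite /face_level -xf le_a'x le_xb'.
Qed.

Lemma face_level_vertex a b lam lam' :
  diag_opposite a b lam lam' ->
  forall j, lam j = face_level a b (j, lam j != a j).
Proof.
move=> opp j; rewrite /face_level /=.
by case: (opp j) => [[-> _]|[-> _]]; case: eqP.
Qed.

(* The face of lam' is indexed through lam rather than as (j, lam' j != a j),
   so that the two indices differ even when a j = b j. *)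
Lemma face_level_opposite_vertex a b lam lam' :
  diag_opposite a b lam lam' ->
  forall j, lam' j = face_level a b (j, lam j == a j).
Proof.
move=> opp j; rewrite /face_level /=.
by case: (opp j) => [[-> ->]|[-> ->]]; case: eqP.
Qed.

End Boxes.

Theorem lemma3 (R : realFieldType) (d : nat)
  (a b a' b' lam lam' : 'I_d -> R)
  (hab : forall j, a j <= b j) (hab' : forall j, a' j <= b' j)
  (hopp : diag_opposite a b lam lam')
  (hB' : ~ in_box a' b' lam /\ ~ in_box a' b' lam') :
  exists f1 f2 : 'I_d * bool,
    f1 <> f2 /\
    (forall x, in_face a b f1 x -> ~ in_box a' b' x) /\
    (forall x, in_face a b f2 x -> ~ in_box a' b' x).
Proof.
case: hB' => /in_boxPn [j lam_out] /in_boxPn [k lam'_out].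
exists (j, lam j != a j), (k, lam k == a k); split; [|split] => [|x|x].
- by case=> -> ; case: (lam k == a k).
- by apply: in_face_outside_box; rewrite -(face_level_vertex hopp).
- by apply: in_face_outside_box; rewrite -(face_level_opposite_vertex hopp).
Qed.
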